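(* Let $H=(\mathbb R^n,E)$ be an algebraic $k$-hypergraph, let $P$ be a $d$-dimensional $k$-template, and suppose $L(\mathbb R^d,P)$ is immersible in $H$. Then $H$ contains an $L(\mathbb R^d,P)$.
   Context: Here $1\le d,n<\omega$, $2\le k<\omega$. A $k$-hypergraph $(V,E)$ has nonempty $V$ and $E$ a set of $k$-element subsets of $V$. A $(k,n)$-ary polynomial is a real polynomial $p(x_0,\dots,x_{k-1})$ with each $x_i$ an $n$-tuple of variables; its zero hypergraph is $(\mathbb R^n,E)$ where $E$ consists of the $k$-element sets $\{a_0,\dots,a_{k-1}\}\subseteq\mathbb R^n$ (distinct $a_i$) with $p(a_0,\dots,a_{k-1})=0$; a hypergraph is algebraic if it is such a zero hypergraph. A $d$-dimensional $k$-template is a set $P$ of $d$-tuples with $|P|=k$. If $P,Q$ are $d$-dimensional templates, $Q$ is a homomorphic image of $P$ if there is a surjection $f:P\to Q$ such that for all $x,y\in P$, $i<d$, $x_i=y_i$ implies $f(x)_i=f(y)_i$. For $X=X_0\times\cdots\times X_{d-1}$, $L(X,P)$ is the $k$-hypergraph with vertex set $X$ whose edges are the $k$-templates $Q\subseteq X$ that are homomorphic images of $P$. An open box in $\mathbb R^m$ is a product of $m$ nonempty open intervals. A function $g$ on $A=A_0\times\cdots\times A_{m-1}$ is one-to-one in each coordinate if whenever $i<m$ and $a,b\in A$ satisfy ($a_j=b_j$ iff $j\ne i$), then $g(a)\ne g(b)$. For an open box $B\subseteq\mathbb R^d$, an immersion of $L(B,P)$ into $H$ is a semialgebraic (semialgebraic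 graph) analytic function $f:B\to\mathbb R^n$ that is one-to-one in each coordinate and such that whenever $\{x_0,\dots,x_{k-1}\}$ is an edge of $L(B,P)$ and $f(x_0),\dots,f(x_{k-1})$ are pairwise distinct, $\{f(x_0),\dots,f(x_{k-1})\}\in E$. $L(\mathbb R^d,P)$ is immersible in $H$ if there is an open box $B\subseteq\mathbb R^d$ and an immersion of $L(B,P)$ into $H$. $H$ contains an $H_1=(V_1,E_1)$ if there is a map $V_1\to\mathbb R^n$ that is an isomorphism of $H_1$ onto a subhypergraph $(V',E')$ of $H$ ($V'\subseteq\mathbb R^n$, $E'\subseteq E$). *)

From HB Require Import structures.
From mathcomp Require Import all_boot all_order all_algebra.
From mathcomp Require Import all_classical all_reals all_analysis.
From mathcomp Require mpoly.
From Stdlib Require List.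
Set Implicit Arguments. Unset Strict Implicit. Unset Printing Implicit Defensive.
Import Order.TTheory GRing.Theory Num.Theory.
Import numFieldNormedType.Exports.
Local Open Scope classical_set_scope.
Local Open Scope ring_scope.

Section Defs.
Variable R : realType.

Definition peval (m : nat) (p : mpoly.mpoly m R) (x : 'rV[R]_m) : R :=
  mpoly.meval (fun j => x 0 j) p.

Definition kset (T : Type) (k : nat) (S : set T) : Prop :=
  exists a : 'I_k -> T, injective a /\ S = [set a i | i in setT].

(* A k-hypergraph with vertex set R^n is given by its edge set
   E : set (set 'rV[R]_n).  A (k,n)-ary polynomial is a polynomial in k*n
   variables; its variables are the entries of a k x n matrix whose i-th row
   is the n-tuple x_i, flattened with mxvec. *)
Definition eval_kn (k n : nat) (p : mpoly.mpoly (k * n) R)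
  (a : 'I_k -> 'rV[R]_n) : R :=
  peval p (mxvec (\matrix_(i < k, j < n) a i 0 j)).

Definition zero_edges (k n : nat) (p : mpoly.mpoly (k * n) R)
  : set (set 'rV[R]_n) :=
  [set S | exists a : 'I_k -> 'rV[R]_n,
      [/\ injective a, S = [set a i | i in setT] & eval_kn p a = 0]].

Definition algebraic (k n : nat) (E : set (set 'rV[R]_n)) : Prop :=
  exists p : mpoly.mpoly (k * n) R, E = zero_edges p.

Definition template (d k : nat) (P : set 'rV[R]_d) : Prop := kset k P.

Definition hom_image (d : nat) (P Q : set 'rV[R]_d) : Prop :=
  exists f : 'rV[R]_d -> 'rV[R]_d,
    f @` P = Q /\
    (forall x y, P x -> P y -> forall i : 'I_d, x 0 i = y 0 i -> f x 0 i = f y 0 i).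

(* the edges of L(X,P): the k-templates Q included in X that are homomorphic
   images of P (the vertex set of L(X,P) is X) *)
Definition L_edges (d k : nat) (X P : set 'rV[R]_d) : set (set 'rV[R]_d) :=
  [set Q | [/\ Q `<=` X, kset k Q & hom_image P Q]].

Definition open_box (m : nat) (B : set 'rV[R]_m) : Prop :=
  exists a b : 'I_m -> R, (forall i, a i < b i) /\
    B = [set x | forall i, a i < x 0 i < b i].

(* semialgebraic subset of R^m: a finite union of finite intersections of
   sets {p = 0} (tag true) or {p > 0} (tag false) *)
Definition atom_holds (m : nat) (c : bool * mpoly.mpoly m R) (x : 'rV[R]_m) : Prop :=
  if c.1 then peval c.2 x = 0 else 0 < peval c.2 x.

Definition semialgebraic (m : nat) (S : set 'rV[R]_m) : Prop :=
  exists F : seq (seq (bool * mpoly.mpoly m R)),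
    S = [set x | exists2 C, Stdlib.Lists.List.In C F & forall c, Stdlib.Lists.List.In c C -> atom_holds c x].

Definition semialgebraic_on (d n : nat) (A : set 'rV[R]_d)
  (f : 'rV[R]_d -> 'rV[R]_n) : Prop :=
  semialgebraic [set row_mx x (f x) | x in A].

Definition ps_partial (d : nat) (c : ('I_d -> nat) -> R) (a x : 'rV[R]_d)
  (N : nat) : R :=
  \sum_(al : {ffun 'I_d -> 'I_N.+1})
     c (fun i => nat_of_ord (al i)) * \prod_(i < d) (x 0 i - a 0 i) ^+ al i.

Definition ps_abs_partial (d : nat) (c : ('I_d -> nat) -> R) (a x : 'rV[R]_d)
  (N : nat) : R :=
  \sum_(al : {ffun 'I_d -> 'I_N.+1})
     `|c (fun i => nat_of_ord (al i))| * \prod_(i < d) `|x 0 i - a 0 i| ^+ al i.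

Definition analytic_on (d n : nat) (A : set 'rV[R]_d)
  (f : 'rV[R]_d -> 'rV[R]_n) : Prop :=
  forall a, A a -> exists2 r : R, 0 < r & forall j : 'I_n,
    exists c : ('I_d -> nat) -> R, forall x, A x ->
      (forall i, `|x 0 i - a 0 i| < r) ->
      (exists M : R, forall N, ps_abs_partial c a x N <= M) /\
      ps_partial c a x N @[N --> \oo] --> f x 0 j.

Definition inj_each_coord (d n : nat) (A : set 'rV[R]_d)
  (g : 'rV[R]_d -> 'rV[R]_n) : Prop :=
  forall (i : 'I_d) a b, A a -> A b ->
    (forall j : 'I_d, a 0 j = b 0 j <-> j != i) -> g a != g b.

Definition immersion (d n k : nat) (E : set (set 'rV[R]_n))
  (P B : set 'rV[R]_d) (f : 'rV[R]_d -> 'rV[R]_n) : Prop :=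
  [/\ semialgebraic_on B f, analytic_on B f, inj_each_coord B f &
      forall Q, L_edges k B P Q -> {in Q &, injective f} -> E (f @` Q)].

Definition immersible (d n k : nat) (E : set (set 'rV[R]_n))
  (P : set 'rV[R]_d) : Prop :=
  exists B f, open_box B /\ immersion k E P B f.

(* H = (R^n, E) contains L(R^d, P): an injective vertex map sending every
   edge of L(R^d,P) onto an edge of H (isomorphism onto a subhypergraph) *)
Definition contains_L (d n k : nat) (E : set (set 'rV[R]_n))
  (P : set 'rV[R]_d) : Prop :=
  exists g : 'rV[R]_d -> 'rV[R]_n,
    injective g /\ forall Q, L_edges k setT P Q -> E (g @` Q).

End Defs.

From HB Require Import structures.
From mathcomp Require Import all_boot all_order all_algebra.
From mathcomp Require Import all_classical all_reals all_analysis.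
From mathcomp Require Import ring lra.
Set Implicit Arguments. Unset Strict Implicit. Unset Printing Implicit Defensive.
Import Order.TTheory GRing.Theory Num.Theory.
Import numFieldNormedType.Exports.
Local Open Scope classical_set_scope.
Local Open Scope ring_scope.

(* Only two properties of the immersion f : B -> R^n are used: it is continuous
   (being analytic) and one-to-one in each coordinate.  Inside the box B build a
   Cantor scheme: at level m every coordinate carries an interval for each binary
   word of length m, children nested strictly inside their parent, such that any
   two distinct d-tuples of words of length m span cells with disjoint f-images.
   One step of the construction separates one pair of cells at a time: moving a
   point along a single coordinate in which the two cells differ gives two points
   with distinct images, and continuity then lets both cells shrink around them.
   Coding each real coordinate by its Dedekind cut along an enumeration of the
   rationals and taking the point of the corresponding branch yields a map
   g = (g_1, ..., g_d) acting coordinatewise with f o g injective.  A coordinatewise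
   injection preserves homomorphic images of P, so f o g embeds L(R^d, P) into H. *)

Section PowerSeries.
Variable R : realType.

Lemma cvg_dist_le (u : nat -> R) (l c K : R) :
  u n @[n --> \oo] --> l -> (forall n, `|u n - c| <= K) -> `|l - c| <= K.
Proof.
move=> ul uK.
have cl : closed ([set z : R | c - K <= z] `&` [set z | z <= c + K]).
  by apply: closedI; [exact: closed_ge | exact: closed_le].
have [|/= h1 h2] := closed_cvg _ cl _ _ ul; last by rewrite ler_norml; lra.
by apply: nearW => m /=; have := uK m; rewrite ler_norml; lra.
Qed.

Lemma prod_expr_le_scaled (d N : nat) (al : {ffun 'I_d -> 'I_N.+1})
    (u rho : 'I_d -> R) (t : R) :
  0 < t -> t <= 1 -> al != [ffun => ord0] -> (forall i, 0 <= u i <= t * rho i) ->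
  \prod_i u i ^+ al i <= t * \prod_i rho i ^+ al i.
Proof.
move=> t0 t1 nal hu.
have rho_ge0 i : 0 <= rho i.
  by have /andP[u0 ut] := hu i; rewrite -(pmulr_rge0 _ t0) (le_trans u0 ut).
have /existsP[i0 al_i0] : [exists i, al i != ord0].
  apply: contraNT nal => /existsPn al0; apply/eqP/ffunP => i.
  by rewrite ffunE; apply/eqP/negbNE/al0.
have sum_gt0 : (0 < \sum_i al i)%N by rewrite (bigD1 i0) //= ltn_addr // lt0n.
apply: (@le_trans _ _ (\prod_i (t * rho i) ^+ al i)).
  apply: ler_prod => i _; have /andP[u0 ut] := hu i.
  by rewrite exprn_ge0 //= lerXn2r // nnegrE (le_trans u0 ut).
rewrite (eq_bigr _ (fun i _ => exprMn _ _ _)) big_split /= prodrXr.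
apply: ler_wpM2r; first by apply: prodr_ge0 => i _; apply: exprn_ge0.
have t_ge0 := ltW t0.
by rewrite -(prednK sum_gt0) exprS ler_piMr ?exprn_ile1.
Qed.

(* Dominating the non-constant terms at y by t times those at z, which is
   farther from the center in every coordinate. *)
Lemma ps_partial_sub_const_le (d : nat) (c : ('I_d -> nat) -> R) (p y z : 'rV[R]_d)
    (N : nat) (t : R) (rho : 'I_d -> R) :
  0 < t -> t <= 1 -> (forall i, `|z 0 i - p 0 i| = rho i) ->
  (forall i, `|y 0 i - p 0 i| <= t * rho i) ->
  `|ps_partial c p y N - c (fun _ => 0%N)| <= t * ps_abs_partial c p z N.
Proof.
move=> t0 t1 hz hy.
pose al0 : {ffun 'I_d -> 'I_N.+1} := [ffun => ord0].
have -> : c (fun _ => 0%N) = c (fun i => nat_of_ord (al0 i)).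
  by congr c; apply: boolp.funext => i; rewrite ffunE.
rewrite /ps_partial /ps_abs_partial (bigD1 al0) //= [X in _ <= _ * X](bigD1 al0) //=.
rewrite (@big1 _ _ _ _ _ _ (fun i => (y 0 i - p 0 i) ^+ al0 i)); last first.
  by move=> i _; rewrite ffunE expr0.
rewrite mulr1 addrC addrK mulrDr.
apply: le_trans (ler_norm_sum _ _ _) _.
rewrite -[X in X <= _]add0r; apply: lerD.
  apply: mulr_ge0; first exact: ltW.
  by apply: mulr_ge0 => //; apply: prodr_ge0 => i _; exact: exprn_ge0.
rewrite mulr_sumr; apply: ler_sum => al nal.
rewrite normrM normr_prod (mulrCA t); apply: ler_wpM2l => //.
under eq_bigr => i _ do rewrite normrX.
under [X in _ <= _ * X]eq_bigr => i _ do rewrite hz.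
by apply: prod_expr_le_scaled => // i; rewrite normr_ge0 hy.
Qed.

End PowerSeries.

Section BoxContinuity.
Variables (R : realType) (d n : nat).

Definition box (a b : 'I_d -> R) : set 'rV[R]_d := [set x | forall i, a i < x 0 i < b i].

Definition coord_continuous_on (A : set 'rV[R]_d) (f : 'rV[R]_d -> 'rV[R]_n) :=
  forall x, A x -> forall (j : 'I_n) (e : R), 0 < e -> exists2 del, 0 < del &
    forall y, A y -> (forall i, `|y 0 i - x 0 i| < del) -> `|f y 0 j - f x 0 j| < e.

Lemma box_radius (a b : 'I_d -> R) (p : 'rV[R]_d) (r : R) :
  box a b p -> 0 < r -> exists rho, [/\ 0 < rho, rho < r & box a b (p + const_mx rho)].
Proof.
move=> Bp r0; pose m := \big[Order.min/r]_i (b i - p 0 i).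
have m_gt0 : 0 < m by rewrite lt_bigmin // => i _; rewrite subr_gt0; case/andP: (Bp i).
have m_le_r : m <= r by exact: bigmin_le_id.
have m_le_b i : m <= b i - p 0 i by exact: bigmin_le.
exists (m / 2); split; [exact: divr_gt0 | lra |] => i.
by rewrite !mxE; have := m_le_b i; case/andP: (Bp i) => ? ? ?; apply/andP; lra.
Qed.

Lemma analytic_on_box_continuous (a b : 'I_d -> R) (f : 'rV[R]_d -> 'rV[R]_n) :
  analytic_on (box a b) f -> coord_continuous_on (box a b) f.
Proof.
move=> f_an p Bp j e e0.
have [r r0 /(_ j)[c hc]] := f_an p Bp.
have [rho [rho_gt0 rho_lt_r Bz]] := box_radius Bp r0.
have zp i : `|(p + const_mx rho) 0 i - p 0 i| = rho.
  by rewrite !mxE addrC addKr gtr0_norm.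
have [[M hM] _] : _ /\ _ := hc _ Bz (fun i => ltac:(by rewrite zp)).
pose K := `|M| + 1.
have K0 : 0 < K by rewrite /K; have := normr_ge0 M; lra.
pose t := Order.min 1 (e / (4 * K)).
have t0 : 0 < t by rewrite lt_min ltr01 /= divr_gt0 // mulr_gt0.
have t1 : t <= 1 by rewrite ge_min lexx.
have tK : t * K <= e / 4.
  have -> : e / 4 = e / (4 * K) * K by field; exact: lt0r_neq0.
  by apply: ler_wpM2r; [exact: ltW | rewrite ge_min lexx orbT].
have near_c0 y : box a b y -> (forall i, `|y 0 i - p 0 i| <= t * rho) ->
    `|f y 0 j - c (fun _ => 0%N)| <= t * K.
  move=> By yp.
  have yr i : `|y 0 i - p 0 i| < r.
    exact: le_lt_trans (yp i) (le_lt_trans (ler_piMl (ltW rho_gt0) t1) rho_lt_r).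
  have [_ cv] := hc y By yr.
  apply: cvg_dist_le cv _ => N.
  apply: le_trans (ps_partial_sub_const_le c N t0 t1 zp yp) _.
  apply: ler_wpM2l; first exact: ltW.
  apply: le_trans (hM N) _.
  by rewrite /K; have := ler_norm M; lra.
exists (t * rho) => [|y By yp]; first exact: mulr_gt0.
have fy := near_c0 y By (fun i => ltW (yp i)).
have fp : `|f p 0 j - c (fun _ => 0%N)| <= t * K.
  by apply: near_c0 => // i; rewrite subrr normr0 mulr_ge0 ?ltW.
have := ler_distD (c (fun _ => 0%N)) (f y 0 j) (f p 0 j).
rewrite (distrC (c _)); lra.
Qed.

Lemma coord_continuous_separate (A : set 'rV[R]_d) (f : 'rV[R]_d -> 'rV[R]_n)
    (x y : 'rV[R]_d) :
  coord_continuous_on A f -> A x -> A y -> f x != f y ->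
  exists2 del, 0 < del & forall x' y', A x' -> A y' ->
    (forall i, `|x' 0 i - x 0 i| < del) -> (forall i, `|y' 0 i - y 0 i| < del) ->
    f x' != f y'.
Proof.
move=> f_cont Ax Ay fxy.
have /existsP[j fxy_j] : [exists j, f x 0 j != f y 0 j].
  by apply: contraNT fxy => /existsPn h; apply/eqP/rowP => j; apply/eqP/negbNE/h.
pose e := `|f x 0 j - f y 0 j| / 2.
have e0 : 0 < e by rewrite divr_gt0 // normr_gt0 subr_eq0.
have [d1 d1_gt0 near_x] := f_cont x Ax j e e0.
have [d2 d2_gt0 near_y] := f_cont y Ay j e e0.
have [le_d1 le_d2] : Order.min d1 d2 <= d1 /\ Order.min d1 d2 <= d2.
  by rewrite !ge_min !lexx orbT.
exists (Order.min d1 d2) => [|x' y' Ax' Ay' x'x y'y]; first by rewrite lt_min d1_gt0.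
have fx' := near_x x' Ax' (fun i => lt_le_trans (x'x i) le_d1).
have fy' := near_y y' Ay' (fun i => lt_le_trans (y'y i) le_d2).
apply/eqP => fx'y'; have := ler_distD (f x' 0 j) (f x 0 j) (f y 0 j).
by rewrite fx'y' (distrC (f x 0 j) (f y' 0 j)) /e in fx' fy' *; lra.
Qed.

End BoxContinuity.

Section RowMaps.
Variables (R : realType) (d : nat).

Definition row_map (phi : 'I_d -> R -> R) (u : 'rV[R]_d) : 'rV[R]_d :=
  \row_i phi i (u 0 i).

Lemma L_edges_row_map (k : nat) (X Y P Q : set 'rV[R]_d) (phi : 'I_d -> R -> R) :
  injective (row_map phi) -> row_map phi @` X `<=` Y ->
  L_edges k X P Q -> L_edges k Y P (row_map phi @` Q).
Proof.
move=> phi_inj XY [QX [q [q_inj eQ]] [h [hP h_coord]]]; subst Q; split.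
- by move=> _ [_ [i _ <-] <-]; apply: XY; exists (q i) => //; apply: QX; exists i.
- by exists (row_map phi \o q); split; [exact: inj_comp | rewrite image_comp].
- exists (row_map phi \o h); split; first by rewrite -image_comp hP.
  by move=> x y Px Py i e; rewrite !mxE (h_coord x y Px Py i e).
Qed.

End RowMaps.

Section RationalCuts.
Variable R : realType.

(* Codes of no rational give [false]. *)
Definition rat_cut (u : R) (m : nat) : bool :=
  if @pickle_inv rat m is Some q then u < ratr q else false.

Lemma rat_cut_lt (u v : R) : u < v -> exists m, rat_cut u m && ~~ rat_cut v m.
Proof.
move=> uv; have [q /[!in_itv] /= /andP[uq qv]] := rat_in_itvoo uv.
by exists (pickle q); rewrite /rat_cut pickleK_inv uq -leNgt ltW.
Qed.

Lemma rat_cut_inj : injective rat_cut.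
Proof.
move=> u v e; apply/eqP; rewrite eq_le !leNgt.
by apply/andP; split; apply/negP => /rat_cut_lt[m]; rewrite e andbN.
Qed.

End RationalCuts.

(* Reversed, so that the children of a word s are the words c :: s. *)
Fixpoint rprefix (be : nat -> bool) (m : nat) : seq bool :=
  if m is m'.+1 then be m' :: rprefix be m' else [::].

Lemma size_rprefix (be : nat -> bool) (m : nat) : size (rprefix be m) = m.
Proof. by elim: m => //= m ->. Qed.

Lemma rprefix_inj_lt (be ga : nat -> bool) (m k : nat) :
  rprefix be m = rprefix ga m -> (k < m)%N -> be k = ga k.
Proof.
elim: m => // m IH /= [e1 e2]; rewrite ltnS leq_eqVlt => /orP[/eqP -> // | ].
exact: IH.
Qed.

Lemma exists_rprefix_neq (d : nat) (be ga : 'I_d -> nat -> bool) :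
  exists M, forall j, be j <> ga j -> rprefix (be j) M <> rprefix (ga j) M.
Proof.
have depth j : exists m, be j <> ga j -> be j m <> ga j m.
  have [e|ne] := pselect (be j = ga j); first by exists 0%N.
  have [m hm] : exists m, be j m <> ga j m by apply/existsNP => e; exact/ne/boolp.funext.
  by exists m.
have [m hm] := boolp.choice depth.
exists (\max_j m j).+1 => j neq eq; apply: (hm j neq).
by apply: rprefix_inj_lt eq _; rewrite ltnS leq_bigmax.
Qed.

Section CantorScheme.
Variables (R : realType) (d n : nat) (f : 'rV[R]_d -> 'rV[R]_n) (a b : 'I_d -> R).
Hypothesis ab : forall i, a i < b i.
Hypothesis f_cont : coord_continuous_on (box a b) f.
Hypothesis f_inj : inj_each_coord (box a b) f.

(* An interval for each coordinate i and each binary word s. *)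
Definition scheme := 'I_d -> seq bool -> R * R.

Implicit Types (I J : scheme) (sg tau : 'I_d -> seq bool).

Definition nondegenerate I := forall i s, (I i s).1 < (I i s).2.

Definition scheme_in_box I := forall i s, a i <= (I i s).1 /\ (I i s).2 <= b i.

Definition subscheme J I :=
  forall i s, (I i s).1 <= (J i s).1 /\ (J i s).2 <= (I i s).2.

Definition cell I sg : set 'rV[R]_d :=
  [set x | forall i, (I i (sg i)).1 < x 0 i < (I i (sg i)).2].

Definition separated I sg tau :=
  forall x y, cell I sg x -> cell I tau y -> f x != f y.

Lemma subscheme_trans I J K : subscheme K J -> subscheme J I -> subscheme K I.
Proof. by move=> KJ JI i s; have := KJ i s; have := JI i s; lra. Qed.

Lemma subscheme_in_box I J : subscheme J I -> scheme_in_box I -> scheme_in_box J.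
Proof. by move=> JI Ib i s; have := JI i s; have := Ib i s; lra. Qed.

Lemma cell_subscheme I J sg : subscheme J I -> cell J sg `<=` cell I sg.
Proof.
move=> JI x x_in i; have := JI i (sg i); have /andP := x_in i.
by move=> ? ?; apply/andP; lra.
Qed.

Lemma separated_subscheme I J sg tau :
  subscheme J I -> separated I sg tau -> separated J sg tau.
Proof. by move=> JI sep x y /(cell_subscheme JI) ? /(cell_subscheme JI); apply: sep. Qed.

Lemma cell_in_box I sg : scheme_in_box I -> cell I sg `<=` box a b.
Proof.
move=> Ib x x_in i; have := Ib i (sg i); have /andP := x_in i.
by move=> ? ?; apply/andP; lra.
Qed.

Definition midpoint (p : R * R) := (p.1 + p.2) / 2.

Lemma midpoint_in (p : R * R) : p.1 < p.2 -> p.1 < midpoint p < p.2.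
Proof. by rewrite /midpoint => ?; apply/andP; lra. Qed.

(* If the two centers have the same image, moving one of them along
   coordinate i0 alone changes its image. *)
Lemma exists_separated_points I sg tau (i0 : 'I_d) :
  nondegenerate I -> scheme_in_box I -> sg i0 != tau i0 ->
  exists x y, [/\ cell I sg x, cell I tau y, f x != f y &
                  forall i, sg i = tau i -> x 0 i = y 0 i].
Proof.
move=> Ind Ib sg_i0.
pose x := \row_i midpoint (I i (sg i)).
pose y0 := \row_i midpoint (I i (tau i)).
have x_in : cell I sg x by move=> i; rewrite mxE midpoint_in.
have y0_in : cell I tau y0 by move=> i; rewrite mxE midpoint_in.
have agree i : sg i = tau i -> x 0 i = y0 0 i by move=> e; rewrite !mxE e.
have [e|ne] := eqVneq (f x) (f y0); last by exists x, y0; split.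
pose y := \row_i if i == i0 then ((I i (tau i)).1 + 3 * (I i (tau i)).2) / 4
                 else midpoint (I i (tau i)).
have y_in : cell I tau y.
  move=> i; rewrite mxE; case: eqP => _; last exact: midpoint_in.
  by have := Ind i (tau i); move=> ?; apply/andP; lra.
exists x, y; split => //.
- rewrite e; apply: (f_inj (i := i0)); [exact: cell_in_box y0_in | exact: cell_in_box y_in |].
  move=> j; rewrite !mxE; case: eqP => [-> | //]; split=> // /eqP.
  by rewrite /midpoint; have := Ind i0 (tau i0); lra.
- move=> i e_i; rewrite (agree i e_i) !mxE; case: eqP => // ei.
  by move: sg_i0; rewrite -ei e_i eqxx.
Qed.

Lemma shrink_around I (c : 'I_d -> seq bool -> R) (del : R) :
  nondegenerate I -> 0 < del -> (forall i s, (I i s).1 < c i s < (I i s).2) ->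
  exists J, [/\ subscheme J I, nondegenerate J &
    forall sg x, cell J sg x -> forall i, `|x 0 i - c i (sg i)| < del].
Proof.
move=> Ind del0 c_in.
exists (fun i s => (Order.max (I i s).1 (c i s - del / 2),
                    Order.min (I i s).2 (c i s + del / 2))); split.
- by move=> i s /=; rewrite le_max lexx ge_min lexx.
- move=> i s /=; have := Ind i s; have /andP := c_in i s.
  by rewrite lt_min !gt_max => -[? ?] ?; apply/andP; split; apply/andP; split; lra.
- move=> sg x x_in i; have /andP[] := x_in i.
  by rewrite gt_max lt_min => /andP[_ ?] /andP[_ ?]; rewrite ltr_norml; apply/andP; lra.
Qed.

Lemma separate_pair I sg tau (i0 : 'I_d) :
  nondegenerate I -> scheme_in_box I -> sg i0 != tau i0 ->
  exists J, [/\ subscheme J I, nondegenerate J & separated J sg tau].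
Proof.
move=> Ind Ib sg_i0.
have [x [y [x_in y_in fxy agree]]] := exists_separated_points Ind Ib sg_i0.
have [del del0 sep] :=
  coord_continuous_separate f_cont (cell_in_box Ib x_in) (cell_in_box Ib y_in) fxy.
pose c i s := if s == sg i then x 0 i
              else if s == tau i then y 0 i else midpoint (I i s).
have c_in i s : (I i s).1 < c i s < (I i s).2.
  rewrite /c; case: eqP => [-> | _]; first exact: x_in.
  by case: eqP => [-> | _]; [exact: y_in | exact: midpoint_in].
have [J [JI Jnd near_c]] := shrink_around Ind del0 c_in.
have Jb := subscheme_in_box JI Ib.
exists J; split => // x' y' x'_in y'_in.
apply: (sep x' y' (cell_in_box Jb x'_in) (cell_in_box Jb y'_in)).
- by move=> i; have := near_c sg x' x'_in i; rewrite /c eqxx.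
- move=> i; have := near_c tau y' y'_in i; rewrite /c eqxx.
  by case: eqP => // e; rewrite (agree i (esym e)).
Qed.

Lemma separate_finite (T : finType) (w : T -> 'I_d -> seq bool) I :
  nondegenerate I -> scheme_in_box I ->
  (forall u v, u != v -> exists i, w u i != w v i) ->
  exists J, [/\ subscheme J I, nondegenerate J &
    forall u v, u != v -> separated J (w u) (w v)].
Proof.
move=> Ind Ib w_inj.
suff [J [JI Jnd sepJ]] : exists J, [/\ subscheme J I, nondegenerate J &
    forall p, p \in enum {: T * T} -> p.1 != p.2 -> separated J (w p.1) (w p.2)].
  by exists J; split => // u v; apply: (sepJ (u, v)); rewrite mem_enum.
elim: (enum _) => [|p l [J [JI Jnd sepJ]]].
  by exists I; split => // i s; rewrite !lexx.
have [e|ne] := eqVneq p.1 p.2.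
  exists J; split => // q; rewrite inE => /orP[/eqP -> | /sepJ //].
  by rewrite e eqxx.
have [i0 w_i0] := w_inj _ _ ne.
have [K [KJ Knd sepK]] := separate_pair Jnd (subscheme_in_box JI Ib) w_i0.
exists K; split => //; first exact: subscheme_trans KJ JI.
move=> q; rewrite inE => /orP[/eqP -> // | /sepJ sep_q nq].
exact: separated_subscheme KJ (sep_q nq).
Qed.

Definition inner_half (p : R * R) := ((3 * p.1 + p.2) / 4, (p.1 + 3 * p.2) / 4).

Definition children I : scheme :=
  fun i s => if s is _ :: s' then inner_half (I i s') else I i [::].

Definition children_within I J :=
  forall i c s, (I i s).1 < (J i (c :: s)).1 /\ (J i (c :: s)).2 < (I i s).2.

Definition separated_words (m : nat) I :=
  forall sg tau : {ffun 'I_d -> m.-tuple bool}, sg != tau ->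
    separated I (fun i => tval (sg i)) (fun i => tval (tau i)).

Lemma separated_words0 I : separated_words 0 I.
Proof.
move=> sg tau; case/negP; apply/eqP/ffunP => i.
by rewrite (tuple0 (sg i)) (tuple0 (tau i)).
Qed.

Lemma refine_scheme (m : nat) I : nondegenerate I -> scheme_in_box I ->
  exists J, [/\ nondegenerate J, scheme_in_box J, separated_words m J &
                children_within I J].
Proof.
move=> Ind Ib.
have ch_nd : nondegenerate (children I).
  by move=> i [|c s] /=; [exact: Ind | have := Ind i s; lra].
have ch_box : scheme_in_box (children I).
  by move=> i [|c s] /=; [exact: Ib | have := Ind i s; have := Ib i s; lra].
have words_neq (sg tau : {ffun 'I_d -> m.-tuple bool}) :
    sg != tau -> exists i, tval (sg i) != tval (tau i).
  move=> ne; have /existsP[i ?] : [exists i, sg i != tau i]; last by exists i.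
  by apply: contraNT ne => /existsPn h; apply/eqP/ffunP => i; apply/eqP/negbNE/h.
have [J [JI Jnd sepJ]] := separate_finite ch_nd ch_box words_neq.
exists J; split => //; first exact: subscheme_in_box JI ch_box.
by move=> i c s; have := JI i (c :: s); have := Ind i s; rewrite /= => ? ?; lra.
Qed.

Definition initial_scheme : scheme := fun i _ => (a i, b i).

Lemma refine_scheme_total (p : nat * scheme) : exists J,
  nondegenerate p.2 -> scheme_in_box p.2 ->
  [/\ nondegenerate J, scheme_in_box J, separated_words p.1 J & children_within p.2 J].
Proof.
have [[Ind Ib] | nI] := pselect (nondegenerate p.2 /\ scheme_in_box p.2).
  by have [J ?] := refine_scheme p.1 Ind Ib; exists J.
by exists p.2 => Ind Ib; case: nI.
Qed.

Let next_scheme := projT1 (boolp.choice refine_scheme_total).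

Fixpoint cantor_scheme (m : nat) : scheme :=
  if m is m'.+1 then next_scheme (m, cantor_scheme m') else initial_scheme.

Lemma cantor_scheme_succ (m : nat) :
  [/\ nondegenerate (cantor_scheme m.+1), scheme_in_box (cantor_scheme m.+1),
      separated_words m.+1 (cantor_scheme m.+1) &
      children_within (cantor_scheme m) (cantor_scheme m.+1)].
Proof.
elim: m => [|m [nd ib _ _]]; apply: (projT2 (boolp.choice refine_scheme_total) (_, _)) => //.
by move=> i s; exact: ab.
Qed.

Lemma cantor_scheme_nondegenerate (m : nat) : nondegenerate (cantor_scheme m).
Proof. by case: m => [i s|m]; [exact: ab | have [] := cantor_scheme_succ m]. Qed.

Lemma cantor_scheme_separated (m : nat) : separated_words m (cantor_scheme m).
Proof. by case: m => [|m]; [exact: separated_words0 | have [] := cantor_scheme_succ m]. Qed.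

Section Branch.
Variables (i : 'I_d) (be : nat -> bool).

Let lo m := (cantor_scheme m i (rprefix be m)).1.
Let hi m := (cantor_scheme m i (rprefix be m)).2.

Definition branch_point : R := sup (range lo).

Lemma branch_point_in (m : nat) : lo m < branch_point < hi m.
Proof.
have [_ _ _ /(_ i (be m) (rprefix be m))[lo_lt hi_lt]] := cantor_scheme_succ m.
have lo_hi k : lo k < hi k := cantor_scheme_nondegenerate k i (rprefix be k).
have /nondecreasing_seqP lo_mono : forall k, lo k <= lo k.+1.
  by move=> k; have [_ _ _ /(_ i (be k) (rprefix be k))[/ltW]] := cantor_scheme_succ k.
have /nonincreasing_seqP hi_mono : forall k, hi k.+1 <= hi k.
  by move=> k; have [_ _ _ /(_ i (be k) (rprefix be k))[_ /ltW]] := cantor_scheme_succ k.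
have lo_ub : ubound (range lo) (hi m.+1).
  move=> _ [k _ <-]; apply: le_trans (lo_mono _ _ (leq_maxl k m.+1)) _.
  exact: le_trans (ltW (lo_hi _)) (hi_mono _ _ (leq_maxr k m.+1)).
have lo_sup : lo m.+1 <= branch_point.
  by apply: ub_le_sup; [exists (hi m.+1) | exists m.+1].
have sup_hi : branch_point <= hi m.+1 by apply: ge_sup => //; exists (lo 0), 0%N.
by apply/andP; split; [exact: lt_le_trans lo_sup | exact: le_lt_trans hi_lt].
Qed.

End Branch.

Definition cantor_coord (i : 'I_d) (r : R) : R := branch_point i (rat_cut r).

Lemma cantor_coord_in_box (u : 'rV[R]_d) : box a b (row_map cantor_coord u).
Proof. by move=> i; rewrite mxE; exact: (branch_point_in i (rat_cut (u 0 i)) 0). Qed.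

(* Distinct rows have cut sequences whose reversed prefixes of some common
   length M differ, so their images lie in two separated cells of level M. *)
Lemma cantor_coord_separated : injective (f \o row_map cantor_coord).
Proof.
move=> u v; apply: contra_eq => uv.
pose be j := rat_cut (u 0 j); pose ga j := rat_cut (v 0 j).
have [M hM] := exists_rprefix_neq be ga.
pose word (w : 'I_d -> nat -> bool) : {ffun 'I_d -> M.-tuple bool} :=
  [ffun j => Tuple (introT eqP (size_rprefix (w j) M))].
have /existsP[j0 uv_j0] : [exists j, u 0 j != v 0 j].
  by apply: contraNT uv => /existsPn h; apply/eqP/rowP => j; apply/eqP/negbNE/h.
have be_j0 : be j0 <> ga j0 by move/rat_cut_inj/eqP; exact/negP.
have word_neq : word be != word ga.
  apply/eqP => /(congr1 (fun t : {ffun 'I_d -> M.-tuple bool} => tval (t j0))).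
  by rewrite !ffunE; exact: hM.
by apply: (cantor_scheme_separated word_neq) => i; rewrite ffunE mxE branch_point_in.
Qed.

End CantorScheme.

Theorem lemma2p1 (R : realType) (d n k : nat) (E : set (set 'rV[R]_n))
  (P : set 'rV[R]_d) :
  (1 <= d)%N -> (1 <= n)%N -> (2 <= k)%N ->
  algebraic k E -> template k P -> immersible k E P ->
  contains_L k E P.
Proof.
move=> _ _ _ _ _ [_ [f [[a [b [ab ->]] [_ f_an f_inj f_edges]]]]].
have f_cont := analytic_on_box_continuous f_an.
pose phi := cantor_coord f_cont f_inj.
have f_phi_inj : injective (f \o row_map phi) by exact: cantor_coord_separated.
have phi_box : row_map phi @` setT `<=` box a b.
  by move=> _ [u _ <-]; exact: (cantor_coord_in_box ab f_cont f_inj u).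
exists (f \o row_map phi); split => // Q LQ; rewrite -image_comp.
apply: f_edges; first exact: L_edges_row_map (inj_compr f_phi_inj) phi_box LQ.
by move=> _ _ /[!inE] -[u _ <-] [v _ <-] /f_phi_inj ->.
Qed.
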